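(* Let $n\ge1$, $\mathcal{D}=\{u\in(0,1)^n:\sum_{i=1}^nu_i<1\}$, $u_0=1-\sum_{i=1}^nu_i$. Let $k_{ij}=k_{ji}>0$ for $i\ne j$ and $k_{ii}=0$ ($i,j=0,\ldots,n$). Let $q_{ij}\ge0$, $r_{ij}=r_{ji}\ge0$ be constants with $q_{i0}=q_{0i}=r_{i0}=r_{ii}=0$, such that $(q_{ij}+r_{ij})_{i,j=1}^n$ is positive definite and $q_{ij}\ge r_{ij}$ for $i,j=1,\ldots,n$. Define, for $i,j=1,\ldots,n$, with $q_i(u)=\sum_{j=1}^nq_{ij}u_j$, $r_i(u)=\sum_{j=1}^nr_{ij}u_j$, $$A_{ij}(u)=(q_i(u)-r_i(u))\delta_{ij}+u_i\Big(q_{ij}-q_j(u)+r_{ij}+r_j(u)-\sum_{\ell=1}^nu_\ell(q_{\ell j}+r_{\ell j})\Big),$$ $$K_{ii}(u)=\sum_{\ell=0}^nk_{i\ell}u_\ell+k_{i0}u_i,\qquad K_{ij}(u)=(k_{i0}-k_{ij})u_i\ (i\ne j).$$ Then for every $u\in\mathcal{D}$, $K(u)$ is invertible and $K(u)^{-1}A(u)$ is positively stable, i.e., all its eigenvalues have positive real parts.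
   Context: $K(u)$ encodes the drag forces: $\sum_{j=0}^nk_{ij}u_iu_j(v_i-v_j)=(K(u)J)_i$ with $J_i=u_iv_i$ and $J_0=-\sum_{i\ge1}J_i$; the multiphase system then reads $\partial_tu=\operatorname{div}(K(u)^{-1}A(u)\nabla u)$. Positive definiteness of a matrix refers to its symmetric part. *)

From HB Require Import structures.
From mathcomp Require Import all_boot all_order all_algebra.
From mathcomp Require Import complex.
Set Implicit Arguments. Unset Strict Implicit. Unset Printing Implicit Defensive.
Import Order.TTheory GRing.Theory Num.Theory.
Local Open Scope ring_scope.

(* Indices 0..n are 'I_n.+1 ; index 0 is ord0, index i (1<=i<=n) is lift ord0 i
   for i : 'I_n. *)

Section Defs.
Variables (R : rcfType) (n : nat).

Definition in_simplex (u : 'I_n -> R) : Prop :=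
  (forall i, 0 < u i /\ u i < 1) /\ \sum_(i < n) u i < 1.

Definition u0 (u : 'I_n -> R) : R := 1 - \sum_(i < n) u i.

Definition ufull (u : 'I_n -> R) (l : 'I_n.+1) : R :=
  match unlift ord0 l with None => u0 u | Some j => u j end.

(* positive definiteness refers to the symmetric part *)
Definition posdef (M : 'M[R]_n) : Prop :=
  forall x : 'rV[R]_n, x != 0 ->
    0 < (x *m ((2%:R)^-1 *: (M + M^T)) *m x^T) ord0 ord0.

Definition qi (q : 'M[R]_n.+1) (u : 'I_n -> R) (i : 'I_n) : R :=
  \sum_(j < n) q (lift ord0 i) (lift ord0 j) * u j.

Definition Amat (q r : 'M[R]_n.+1) (u : 'I_n -> R) : 'M[R]_n :=
  \matrix_(i < n, j < n)
    ((qi q u i - qi r u i) * (i == j)%:R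
     + u i * (q (lift ord0 i) (lift ord0 j) - qi q u j
              + r (lift ord0 i) (lift ord0 j) + qi r u j
              - \sum_(l < n) u l * (q (lift ord0 l) (lift ord0 j)
                                    + r (lift ord0 l) (lift ord0 j)))).

Definition Kmat (k : 'M[R]_n.+1) (u : 'I_n -> R) : 'M[R]_n :=
  \matrix_(i < n, j < n)
    (if i == j then
       \sum_(l < n.+1) k (lift ord0 i) l * ufull u l + k (lift ord0 i) ord0 * u i
     else (k (lift ord0 i) ord0 - k (lift ord0 i) (lift ord0 j)) * u i).

Definition pos_stable (M : 'M[R]_n) : Prop :=
  forall z : R[i], eigenvalue (map_mx (fun x => x%:C%C) M) z -> 0 < complex.Re z.

End Defs.

(* The Hessian H = diag(1/u_i) + 1/u_0 of the entropy symmetrizes the system.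
   H K(u) is symmetric positive definite: it is the sum of a weighted graph
   Laplacian of the drag coefficients k_ij (i, j >= 1), which is positive
   semidefinite, and of a positive definite matrix coming from the drag k_i0
   with phase 0.  H A(u) = diag((q_i - r_i)/u_i) + (q_ij + r_ij) is positive
   definite.  If v K^-1 A = z v with v <> 0, then y = v (H K)^-1 satisfies
   y (H A) = z y (H K), and pairing the real and imaginary parts of this
   identity with those of y gives Re z > 0. *)

From HB Require Import structures.
From mathcomp Require Import all_boot all_order all_algebra.
From mathcomp Require Import complex.
From mathcomp Require Import ring lra.
Set Implicit Arguments.
Unset Strict Implicit.
Unset Printing Implicit Defensive.
Import Order.TTheory GRing.Theory Num.Theory.
Local Open Scope ring_scope.

Section QuadraticForm.
Variables (R : rcfType) (n : nat).
Implicit Types (M : 'M[R]_n) (x : 'rV[R]_n).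

Definition qform M x : R := (x *m M *m x^T) 0 0.

Lemma qformE M x : qform M x = \sum_i \sum_j x 0 i * M i j * x 0 j.
Proof.
rewrite /qform mxE exchange_big /=; apply: eq_bigr => j _.
by rewrite !mxE mulr_suml; apply: eq_bigr => i _.
Qed.

Lemma qformD M N x : qform (M + N) x = qform M x + qform N x.
Proof. by rewrite /qform mulmxDr mulmxDl mxE. Qed.

Lemma qformB M N x : qform (M - N) x = qform M x - qform N x.
Proof.
rewrite !qformE -sumrB; apply: eq_bigr => i _.
by rewrite -sumrB; apply: eq_bigr => j _; rewrite !mxE; ring.
Qed.

Lemma qform_tr M x : qform M^T x = qform M x.
Proof.
rewrite /qform.
have -> : x *m M^T *m x^T = (x *m M *m x^T)^T by rewrite !trmx_mul trmxK mulmxA.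
by rewrite mxE.
Qed.

Lemma qform_diag (d : 'rV[R]_n) x : qform (diag_mx d) x = \sum_i d 0 i * x 0 i ^+ 2.
Proof.
rewrite qformE; apply: eq_bigr => i _; rewrite (bigD1 i) //= big1 ?addr0.
  by rewrite mxE eqxx mulr1n; ring.
by move=> j /negbTE ji; rewrite mxE eq_sym ji mulr0n mulr0 mul0r.
Qed.

Lemma posdefP M : posdef M <-> forall x, x != 0 -> 0 < qform M x.
Proof.
have sym_part x : qform (2%:R^-1 *: (M + M^T)) x = qform M x.
  rewrite {1}/qform -scalemxAr -scalemxAl mxE -/(qform (M + M^T) x).
  by rewrite qformD qform_tr; field.
by split=> pdM x /pdM; rewrite -/(qform _ _) sym_part.
Qed.

Lemma posdef_qform_ge0 M x : posdef M -> 0 <= qform M x.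
Proof.
move/posdefP=> pdM; have [->|/pdM/ltW//] := eqVneq x 0.
by rewrite /qform mul0mx mul0mx mxE.
Qed.

Lemma posdef_unitmx M : posdef M -> M \in unitmx.
Proof.
move/posdefP=> pdM; rewrite unitmxE unitfE; apply/negP => /det0P[x x_neq0 xM0].
by have := pdM x x_neq0; rewrite /qform xM0 mul0mx mxE ltxx.
Qed.

Lemma sym_bilinear_formC (S : 'M[R]_n) (a b : 'rV[R]_n) :
  S^T = S -> (b *m S *m a^T) 0 0 = (a *m S *m b^T) 0 0.
Proof.
move=> symS; have -> : b *m S *m a^T = (a *m S *m b^T)^T.
  by rewrite !trmx_mul trmxK symS mulmxA.
by rewrite mxE.
Qed.

Lemma posdef_add M N : (forall x, 0 <= qform M x) -> posdef N -> posdef (M + N).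
Proof.
move=> psdM /posdefP pdN; apply/posdefP => x /pdN; rewrite qformD.
by have := psdM x; lra.
Qed.

End QuadraticForm.

Section RealImaginaryParts.
Variable R : rcfType.
Local Notation Re := (@complex.Re R).
Local Notation Im := (@complex.Im R).
Local Notation mxC := (map_mx (real_complex R)).
Variables m n : nat.
Implicit Types y : 'M[R[i]]_(m, n).

Lemma map_Re_mulmx p y (M : 'M[R]_(n, p)) : map_mx Re (y *m mxC M) = map_mx Re y *m M.
Proof.
apply/matrixP => i j; rewrite !mxE (raddf_sum (Re : Rcomplex R -> R)).
by apply: eq_bigr => l _; rewrite !mxE; case: (y i l) => a b /=; rewrite mulr0 subr0.
Qed.

Lemma map_Im_mulmx p y (M : 'M[R]_(n, p)) : map_mx Im (y *m mxC M) = map_mx Im y *m M.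
Proof.
apply/matrixP => i j; rewrite !mxE (raddf_sum (Im : Rcomplex R -> R)).
by apply: eq_bigr => l _; rewrite !mxE; case: (y i l) => a b /=; rewrite mulr0 add0r.
Qed.

Lemma map_Re_scale (z : R[i]) y :
  map_mx Re (z *: y) = Re z *: map_mx Re y - Im z *: map_mx Im y.
Proof. by apply/matrixP => i j; rewrite !mxE; case: z; case: (y i j). Qed.

Lemma map_Im_scale (z : R[i]) y :
  map_mx Im (z *: y) = Im z *: map_mx Re y + Re z *: map_mx Im y.
Proof. by apply/matrixP => i j; rewrite !mxE; case: z; case: (y i j) => a b c d /=; ring. Qed.

Lemma map_Re_Im_eq0 y : map_mx Re y = 0 -> map_mx Im y = 0 -> y = 0.
Proof.
move=> /matrixP yRe /matrixP yIm; apply/matrixP => i j.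
by move: (yRe i j) (yIm i j); rewrite !mxE; case: (y i j) => a b /= -> ->.
Qed.

End RealImaginaryParts.

Section Symmetrizer.
Variables (R : rcfType) (n : nat).
Local Notation Re := (@complex.Re R).
Local Notation Im := (@complex.Im R).
Local Notation mxC := (map_mx (real_complex R)).

Lemma generalized_eigenvalue_Re_gt0 (S P : 'M[R]_n) (y : 'rV[R[i]]_n) (z : R[i]) :
  S^T = S -> posdef S -> posdef P -> y != 0 ->
  y *m mxC P = z *: (y *m mxC S) -> 0 < Re z.
Proof.
move=> symS pdS pdP y_neq0 yPS.
set a := map_mx Re y; set b := map_mx Im y.
have aP : a *m P = Re z *: (a *m S) - Im z *: (b *m S).
  by rewrite -map_Re_mulmx yPS map_Re_scale map_Re_mulmx map_Im_mulmx.
have bP : b *m P = Im z *: (a *m S) + Re z *: (b *m S).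
  by rewrite -map_Im_mulmx yPS map_Im_scale map_Re_mulmx map_Im_mulmx.
(* Pair the real and imaginary parts of [y P = z y S] with [a] and [b]: the
   cross terms cancel because S is symmetric. *)
have PS : qform P a + qform P b = Re z * (qform S a + qform S b).
  rewrite /qform aP bP mulmxBl mulmxDl -!scalemxAl.
  rewrite ![(_ + _ : 'M[R]_1) 0 0]mxE [(- _ : 'M[R]_1) 0 0]mxE.
  rewrite ![(_ *: _ : 'M[R]_1) 0 0]mxE (sym_bilinear_formC a b symS).
  ring.
have pair_gt0 M : posdef M -> 0 < qform M a + qform M b.
  move=> pdM; have aM := posdef_qform_ge0 a pdM; have bM := posdef_qform_ge0 b pdM.
  move/posdefP: pdM => pdM.
  have [a0|/pdM] := eqVneq a 0; last lra.
  have [b0|/pdM] := eqVneq b 0; last lra.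
  by move/eqP: y_neq0; rewrite (map_Re_Im_eq0 a0 b0).
by rewrite -(pmulr_lgt0 _ (pair_gt0 S pdS)) -PS pair_gt0.
Qed.

Lemma symmetrizer_pos_stable (H K A : 'M[R]_n) :
  (H *m K)^T = H *m K -> posdef (H *m K) -> posdef (H *m A) ->
  K \in unitmx /\ pos_stable (invmx K *m A).
Proof.
move=> symS pdS pdP.
have /andP[uH uK] : (H \in unitmx) && (K \in unitmx) by rewrite -unitmx_mul posdef_unitmx.
split=> // z /eigenvalueP[v vKA v_neq0].
have uHC : mxC H \in unitmx by rewrite map_unitmx.
have uKC : mxC K \in unitmx by rewrite map_unitmx.
set y := v *m invmx (mxC K) *m invmx (mxC H).
have yS : y *m mxC (H *m K) = v by rewrite map_mxM mulmxA mulmxKV // mulmxKV.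
apply: (generalized_eigenvalue_Re_gt0 (y := y) symS pdS pdP).
  by apply: contraNneq v_neq0 => y0; rewrite -yS y0 mul0mx.
rewrite yS map_mxM mulmxA mulmxKV // -mulmxA -map_invmx -map_mxM.
exact: vKA.
Qed.

End Symmetrizer.

Section LaplacianCoupling.
Variables (R : rcfType) (n : nat).
Implicit Types (w : 'M[R]_n) (a u : 'I_n -> R) (x : 'rV[R]_n).

Definition laplacian_mx w u : 'M[R]_n :=
  diag_mx (\row_i ((\sum_j w i j * u j) / u i)) - w.

Lemma laplacian_mx_sym w u : w^T = w -> (laplacian_mx w u)^T = laplacian_mx w u.
Proof. by move=> symw; rewrite /laplacian_mx linearB /= tr_diag_mx symw. Qed.

Lemma qform_laplacian_ge0 w u x : w^T = w -> (forall i j, 0 <= w i j) ->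
  (forall i, 0 < u i) -> 0 <= qform (laplacian_mx w u) x.
Proof.
move=> symw w_ge0 u_gt0.
have wC i j : w i j = w j i by rewrite -[in LHS]symw mxE.
have u_neq0 i : u i != 0 by rewrite gt_eqF.
have -> : qform (laplacian_mx w u) x =
    \sum_i \sum_j w i j * (u j * x 0 i ^+ 2 / u i - x 0 i * x 0 j).
  rewrite qformB qform_diag qformE -sumrB; apply: eq_bigr => i _.
  rewrite mxE mulr_suml mulr_suml -sumrB; by apply: eq_bigr => j _; ring.
set T := \sum_i _.
have TT : T + T = \sum_i \sum_j w i j * ((x 0 i * u j - x 0 j * u i) ^+ 2 / (u i * u j)).
  rewrite {1}/T exchange_big -big_split /=; apply: eq_bigr => i _.
  rewrite -big_split /=; apply: eq_bigr => j _.
  by rewrite wC; field; rewrite u_neq0 u_neq0.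
suff : 0 <= T + T by lra.
rewrite TT; apply: sumr_ge0 => i _; apply: sumr_ge0 => j _.
by rewrite mulr_ge0 // divr_ge0 ?sqr_ge0 // mulr_ge0 // ltW.
Qed.

Definition coupling_mx a u (v : R) : 'M[R]_n :=
  diag_mx (\row_i (a i * v / u i)) + \matrix_(i, j) (a i + a j + (\sum_l a l * u l) / v).

Lemma coupling_mx_sym a u v : (coupling_mx a u v)^T = coupling_mx a u v.
Proof.
rewrite /coupling_mx linearD /= tr_diag_mx; congr (_ + _).
by apply/matrixP => i j; rewrite !mxE [a j + _]addrC.
Qed.

Lemma qform_coupling_mx a u v x : (forall i, u i != 0) -> v != 0 ->
  qform (coupling_mx a u v) x =
  \sum_i a i * v / u i * (x 0 i + u i * (\sum_j x 0 j) / v) ^+ 2.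
Proof.
move=> u_neq0 v_neq0.
set X := \sum_j x 0 j; set Y := \sum_i a i * x 0 i; set c := \sum_l a l * u l.
have -> : \sum_i a i * v / u i * (x 0 i + u i * X / v) ^+ 2 =
    \sum_i (a i * v / u i * x 0 i ^+ 2) + (Y * (2%:R * X) + c * (X ^+ 2 / v)).
  rewrite /Y /c !mulr_suml -!big_split /=; apply: eq_bigr => i _.
  by field; rewrite u_neq0 v_neq0.
rewrite qformD qform_diag; congr (_ + _).
  by apply: eq_bigr => i _; rewrite mxE.
have -> : qform (\matrix_(i, j) (a i + a j + c / v)) x =
    \sum_i (a i * x 0 i * X + x 0 i * Y + x 0 i * (c / v) * X).
  rewrite qformE; apply: eq_bigr => i _.
  rewrite (eq_bigr (fun j =>
    a i * x 0 i * x 0 j + x 0 i * (a j * x 0 j) + x 0 i * (c / v) * x 0 j)).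
    by rewrite !big_split /= -!mulr_sumr.
  by move=> j _; rewrite mxE; ring.
by rewrite !big_split /= -!mulr_suml -/X -/Y; ring.
Qed.

Lemma coupling_mx_posdef a u v : (forall i, 0 < a i) -> (forall i, 0 < u i) -> 0 < v ->
  posdef (coupling_mx a u v).
Proof.
move=> a_gt0 u_gt0 v_gt0; apply/posdefP => x; apply: contraNT; rewrite -leNgt => qx_le0.
have u_neq0 i : u i != 0 by rewrite gt_eqF.
have w_gt0 i : 0 < a i * v / u i by rewrite divr_gt0 ?mulr_gt0.
move: qx_le0; rewrite qform_coupling_mx ?gt_eqF //; set X := \sum_j x 0 j => qx_le0.
have term_ge0 i : 0 <= a i * v / u i * (x 0 i + u i * X / v) ^+ 2.
  by rewrite mulr_ge0 ?sqr_ge0 ?ltW.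
have qx0 : \sum_i a i * v / u i * (x 0 i + u i * X / v) ^+ 2 = 0.
  by apply/eqP; rewrite eq_le qx_le0 sumr_ge0.
have xE i : x 0 i + u i * X / v = 0.
  have /eqP := @psumr_eq0P _ _ _ _ (fun j _ => term_ge0 j) qx0 i isT.
  by rewrite mulf_eq0 (gt_eqF (w_gt0 i)) sqrf_eq0 => /eqP.
have X0 : X = 0.
  have sumxE : \sum_i (x 0 i + u i * X / v) = 0 by apply: big1 => i _; exact: xE.
  rewrite big_split /= -!mulr_suml -/X in sumxE.
  have sum_gt0 : 0 < v + \sum_i u i by rewrite ltr_wpDr // sumr_ge0 // => i _; apply: ltW.
  have : X * (v + \sum_i u i) = v * (X + (\sum_i u i) * X / v).
    by field; rewrite gt_eqF.
  by rewrite sumxE mulr0 => /eqP; rewrite mulf_eq0 (gt_eqF sum_gt0) orbF => /eqP.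
by apply/eqP/rowP => i; have := xE i; rewrite X0 mulr0 mul0r addr0 mxE.
Qed.

End LaplacianCoupling.

Lemma sum_delta (R : pzSemiRingType) n (F : 'I_n -> R) j :
  \sum_l (l == j)%:R * F l = F j.
Proof. by rewrite (bigD1 j) //= eqxx mul1r big1 ?addr0 // => l /negbTE->; rewrite mul0r. Qed.

Section EntropyHessian.
Variables (R : rcfType) (n : nat) (u : 'I_n -> R).
Hypotheses (u_gt0 : forall i, 0 < u i) (u0_gt0 : 0 < u0 u).

Let u_neq0 i : u i != 0. Proof. by rewrite gt_eqF. Qed.
Let u0_neq0 : u0 u != 0. Proof. by rewrite gt_eqF. Qed.

(* The Hessian of the entropy [\sum_(i = 0..n) u_i ln u_i] as a function of
   u_1, ..., u_n, where u_0 = 1 - \sum_i u_i. *)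
Definition entropy_hess : 'M[R]_n := diag_mx (\row_i (u i)^-1) + const_mx (u0 u)^-1.

Lemma entropy_hess_mulE (M : 'M[R]_n) i j :
  (entropy_hess *m M) i j = M i j / u i + (\sum_l M l j) / u0 u.
Proof.
rewrite mulmxDl mul_diag_mx !mxE mulrC mulr_suml; congr (_ + _).
by apply: eq_bigr => l _; rewrite mxE mulrC.
Qed.

Section Drag.
Variable k : 'M[R]_n.+1.
Hypotheses (k_sym : forall i j, k i j = k j i) (k_gt0 : forall i j, i != j -> 0 < k i j)
  (k_diag : forall i, k i i = 0).
Local Notation kl i j := (k (lift ord0 i) (lift ord0 j)).
Local Notation k0 i := (k (lift ord0 i) ord0).

Let kl_mx_sym : (\matrix_(i, j) kl i j)^T = \matrix_(i, j) kl i j :> 'M[R]_n.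
Proof. by apply/matrixP => i j; rewrite !mxE k_sym. Qed.

Lemma KmatE i j : Kmat k u i j =
  (i == j)%:R * (k0 i * u0 u + \sum_m kl i m * u m) + (k0 i - kl i j) * u i.
Proof.
rewrite mxE big_ord_recl /ufull unlift_none.
under eq_bigr => m _ do rewrite liftK.
by case: eqVneq => [<-|_]; rewrite ?k_diag /=; ring.
Qed.

Lemma Kmat_col_sum j : \sum_l Kmat k u l j = k0 j * u0 u + \sum_l k0 l * u l.
Proof.
under eq_bigr => l _ do rewrite KmatE.
rewrite big_split /= sum_delta.
have -> : \sum_l (k0 l - kl l j) * u l = \sum_l k0 l * u l - \sum_m kl j m * u m.
  by rewrite -sumrB; apply: eq_bigr => l _; rewrite [kl l j]k_sym mulrBl.
ring.
Qed.

Lemma entropy_hess_Kmat : entropy_hess *m Kmat k u =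
  laplacian_mx (\matrix_(i, j) kl i j) u + coupling_mx (fun i => k0 i) u (u0 u).
Proof.
apply/matrixP => i j; rewrite entropy_hess_mulE Kmat_col_sum KmatE !mxE /=.
under [X in X / u i *+ _]eq_bigr => m _ do rewrite mxE.
by case: eqVneq => _; field; rewrite u_neq0 u0_neq0.
Qed.

Lemma entropy_hess_Kmat_sym : (entropy_hess *m Kmat k u)^T = entropy_hess *m Kmat k u.
Proof. by rewrite entropy_hess_Kmat linearD /= coupling_mx_sym laplacian_mx_sym. Qed.

Lemma entropy_hess_Kmat_posdef : posdef (entropy_hess *m Kmat k u).
Proof.
rewrite entropy_hess_Kmat; apply: posdef_add => [x|].
  apply: qform_laplacian_ge0 => // i j; rewrite mxE.
  have [->|i_neq_j] := eqVneq i j; first by rewrite k_diag.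
  by rewrite ltW // k_gt0 // (inj_eq lift_inj).
apply: coupling_mx_posdef => // i; apply: k_gt0; rewrite eq_sym; exact: neq_lift.
Qed.

End Drag.

Section CrossDiffusion.
Variables q r : 'M[R]_n.+1.
Local Notation ql i j := (q (lift ord0 i) (lift ord0 j)).
Local Notation rl i j := (r (lift ord0 i) (lift ord0 j)).

Lemma Amat_col_sum j : \sum_l Amat q r u l j =
  (qi q u j - qi r u j + \sum_l u l * (ql l j + rl l j)) * u0 u.
Proof.
set S := \sum_l u l * _.
under eq_bigr => l _ do rewrite mxE [_ * (l == j)%:R]mulrC.
rewrite big_split /= sum_delta -/S.
have -> : \sum_l u l * (ql l j - qi q u j + rl l j + qi r u j - S) =
    S - (\sum_l u l) * (qi q u j - qi r u j + S).
  by rewrite mulr_suml -sumrB; apply: eq_bigr => l _; ring.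
have -> : \sum_l u l = 1 - u0 u by rewrite /u0; ring.
ring.
Qed.

Lemma entropy_hess_Amat : entropy_hess *m Amat q r u =
  diag_mx (\row_i ((qi q u i - qi r u i) / u i)) + \matrix_(i, j) (ql i j + rl i j).
Proof.
apply/matrixP => i j; rewrite entropy_hess_mulE Amat_col_sum !mxE.
by case: eqVneq => _; field; rewrite u_neq0 u0_neq0.
Qed.

Lemma entropy_hess_Amat_posdef : (forall i j, rl i j <= ql i j) ->
  posdef (\matrix_(i, j) (ql i j + rl i j)) -> posdef (entropy_hess *m Amat q r u).
Proof.
move=> rq pdQR; rewrite entropy_hess_Amat; apply: posdef_add => // x.
rewrite qform_diag; apply: sumr_ge0 => i _.
rewrite mxE mulr_ge0 ?sqr_ge0 // divr_ge0 ?(ltW (u_gt0 i)) // /qi -sumrB.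
by apply: sumr_ge0 => j _; rewrite -mulrBl mulr_ge0 ?subr_ge0 // ltW.
Qed.

End CrossDiffusion.
End EntropyHessian.

Theorem proposition11 (R : rcfType) (n : nat) (hn : (0 < n)%N)
    (k q r : 'M[R]_n.+1)
    (hk_sym : forall i j, k i j = k j i)
    (hk_pos : forall i j, i != j -> 0 < k i j)
    (hk_diag : forall i, k i i = 0)
    (hq_nn : forall i j, 0 <= q i j)
    (hr_nn : forall i j, 0 <= r i j)
    (hr_sym : forall i j, r i j = r j i)
    (hq_i0 : forall i, q i ord0 = 0)
    (hq_0i : forall i, q ord0 i = 0)
    (hr_i0 : forall i, r i ord0 = 0)
    (hr_ii : forall i, r i i = 0)
    (hqr_pd : posdef (\matrix_(i < n, j < n)
                        (q (lift ord0 i) (lift ord0 j) + r (lift ord0 i) (lift ord0 j))))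
    (hqr_ge : forall i j : 'I_n, r (lift ord0 i) (lift ord0 j) <= q (lift ord0 i) (lift ord0 j))
    (u : 'I_n -> R) (hu : in_simplex u) :
  Kmat k u \in unitmx /\ pos_stable (invmx (Kmat k u) *m Amat q r u).
Proof.
have [u_bounds sum_u_lt1] := hu.
have u_gt0 i : 0 < u i by case: (u_bounds i).
have u0_gt0 : 0 < u0 u by rewrite subr_gt0.
apply: (symmetrizer_pos_stable (H := entropy_hess u)).
- exact: entropy_hess_Kmat_sym.
- exact: entropy_hess_Kmat_posdef.
- exact: entropy_hess_Amat_posdef.
Qed.
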